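(* Let $(X,d)$ be a metric space and $\tilde x$ a sequence of points of $X$. The following are equivalent: (i) $\tilde x$ is $d$-statistically convergent; (ii) every subsequence $\tilde x'$ of $\tilde x$ with $\liminf_{n\to\infty}\frac{|K_{\tilde x'}(n)|}{n}>0$ is $d$-statistically convergent; (iii) every dense subsequence $\tilde x'$ of $\tilde x$ is $d$-statistically convergent.
   Context: A sequence $(z_k)$ in $(X,d)$ is $d$-statistically convergent to $a\in X$ if for every $\epsilon>0$, $\lim_{n\to\infty}\frac{1}{n}|\{k\le n: d(z_k,a)\ge\epsilon\}|=0$, and $d$-statistically convergent if this holds for some $a\in X$; a subsequence $(x_{n(k)})_k$ (with $(n(k))$ infinite and strictly increasing) is regarded as the sequence $k\mapsto x_{n(k)}$. For a subsequence $\tilde x'=(x_{n(k)})$, $K_{\tilde x'}=\{n(k):k\in\mathbb N\}$ and $K_{\tilde x'}(n)=\{m\in K_{\tilde x'}:m\le n\}$. A set $K\subseteq\mathbb N$ is statistical dense if $\lim_{n\to\infty}|\{k\in K:k\le n\}|/n=1$; $\tilde x'$ is a dense subsequence of $\tilde x$ if $K_{\tilde x'}$ is a statistical dense subset of $\mathbb N$. *)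

From Stdlib Require Import Reals.
From Coquelicot Require Import Coquelicot.
Open Scope R_scope.

Definition is_metric {X : Type} (d : X -> X -> R) : Prop :=
  (forall x y, 0 <= d x y) /\
  (forall x y, d x y = 0 <-> x = y) /\
  (forall x y, d x y = d y x) /\
  (forall x y z, d x z <= d x y + d y z).

Fixpoint count_lt (P : nat -> bool) (n : nat) : nat :=
  match n with
  | O => O
  | S m => (if P m then 1 else 0) + count_lt P m
  end%nat.

(* Sequences are indexed by nat = {0,1,2,...}; index k stands for the
   paper's index k+1, so {k <= n} in the paper is {k < n} here. *)

Definition bad_density {X : Type} (d : X -> X -> R) (z : nat -> X) (a : X)
  (eps : R) (n : nat) : R :=
  INR (count_lt (fun k => if Rle_dec eps (d (z k) a) then true else false) n)
  / INR n.

Definition stat_conv_to {X : Type} (d : X -> X -> R) (z : nat -> X) (a : X) : Prop :=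
  forall eps : R, 0 < eps -> is_lim_seq (bad_density d z a eps) 0.

Definition stat_conv {X : Type} (d : X -> X -> R) (z : nat -> X) : Prop :=
  exists a : X, stat_conv_to d z a.

(* A subsequence is given by a strictly increasing index map s. *)
Definition strictly_incr (s : nat -> nat) : Prop :=
  forall k, (s k < s (S k))%nat.

(* |K_{x'}(n)| = |{ s k : s k <= n }| (paper indexing), i.e. the number of
   k with s k < n here; since s is strictly increasing, s k >= k, so such k
   are all < n and are counted exactly once. *)
Definition K_count (s : nat -> nat) (n : nat) : nat :=
  count_lt (fun k => Nat.ltb (s k) n) n.

Definition K_ratio (s : nat -> nat) (n : nat) : R := INR (K_count s n) / INR n.

Definition stat_dense_sub (s : nat -> nat) : Prop :=
  is_lim_seq (K_ratio s) 1.

From Stdlib Require Import Reals Lra Lia.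
From Coquelicot Require Import Coquelicot.
Open Scope R_scope.

(* If the subsequence x∘s occupies a proportion at least c > 0 of the indices,
   then every bad term (d (x k) a >= eps) of x∘s among its first n+1 terms is a bad term of x
   below N = s n + 1, while x∘s has at most n+1 terms below N; hence the bad
   density of x∘s at n+1 is at most (bad density of x at N) / c, which tends
   to 0. *)

Lemma count_lt_S (P : nat -> bool) (n : nat) :
  count_lt P (S n) = ((if P n then 1 else 0) + count_lt P n)%nat.
Proof. reflexivity. Qed.

Lemma count_lt_impl (P Q : nat -> bool) (n : nat) :
  (forall k, P k = true -> Q k = true) -> (count_lt P n <= count_lt Q n)%nat.
Proof.
  intros HPQ; induction n as [|n IH]; simpl; [lia|].
  destruct (P n) eqn:HPn; [rewrite (HPQ _ HPn)|destruct (Q n)]; lia.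
Qed.

Lemma count_lt_mono (P : nat -> bool) (n m : nat) :
  (n <= m)%nat -> (count_lt P n <= count_lt P m)%nat.
Proof. induction 1 as [|m _ IH]; simpl; [|destruct (P m)]; lia. Qed.

Lemma count_lt_ltb (m n : nat) : count_lt (fun k => Nat.ltb k m) n = Nat.min n m.
Proof.
  induction n as [|n IH]; [reflexivity|]; simpl count_lt; rewrite IH.
  destruct (Nat.ltb_spec n m); lia.
Qed.

Lemma strictly_incr_lt (s : nat -> nat) :
  strictly_incr s -> forall i j, (i < j)%nat -> (s i < s j)%nat.
Proof.
  intros Hs i j Hij; induction Hij as [|j _ IH]; [apply Hs|].
  specialize (Hs j); lia.
Qed.

Lemma count_lt_subseq (P : nat -> bool) (s : nat -> nat) (n : nat) :
  strictly_incr s ->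
  (count_lt (fun k => P (s k)) (S n) <= count_lt P (S (s n)))%nat.
Proof.
  intros Hs; induction n as [|n IH].
  - simpl; destruct (P (s 0%nat)); lia.
  - pose proof (count_lt_mono P (S (s n)) (s (S n)) (Hs n)).
    rewrite (count_lt_S _ (S n)), (count_lt_S P (s (S n))).
    destruct (P (s (S n))); lia.
Qed.

Lemma K_count_le (s : nat -> nat) (n : nat) :
  strictly_incr s -> (K_count s (S (s n)) <= S n)%nat.
Proof.
  intros Hs; unfold K_count.
  apply Nat.le_trans with (count_lt (fun k => Nat.ltb k (S n)) (S (s n))).
  - apply count_lt_impl; intros k Hk.
    apply Nat.ltb_lt in Hk; apply Nat.ltb_lt.
    destruct (Nat.le_gt_cases k n) as [Hkn|Hnk]; [lia|].
    pose proof (strictly_incr_lt s Hs n k Hnk); lia.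
  - rewrite count_lt_ltb; lia.
Qed.

Lemma count_lt_subseq_density_le (P : nat -> bool) (s : nat -> nat) (n : nat) :
  strictly_incr s ->
  INR (count_lt (fun k => P (s k)) (S n)) / INR (S n) * K_ratio s (S (s n))
    <= INR (count_lt P (S (s n))) / INR (S (s n)).
Proof.
  intros Hs; unfold K_ratio.
  pose proof (le_INR _ _ (count_lt_subseq P s n Hs)) as Hbad.
  pose proof (le_INR _ _ (K_count_le s n Hs)) as HK.
  pose proof (pos_INR (count_lt (fun k => P (s k)) (S n))).
  pose proof (pos_INR (K_count s (S (s n)))).
  assert (0 < INR (S n)) by (apply lt_0_INR; lia).
  assert (0 < INR (S (s n))) by (apply lt_0_INR; lia).
  unfold Rdiv; apply Rmult_le_reg_r with (INR (S (s n)) * INR (S n)); [nra|].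
  replace (INR (count_lt P (S (s n))) * / INR (S (s n)) * (INR (S (s n)) * INR (S n)))
    with (INR (count_lt P (S (s n))) * INR (S n)) by (field; lra).
  replace (INR (count_lt (fun k => P (s k)) (S n)) * / INR (S n) *
           (INR (K_count s (S (s n))) * / INR (S (s n))) * (INR (S (s n)) * INR (S n)))
    with (INR (count_lt (fun k => P (s k)) (S n)) * INR (K_count s (S (s n))))
    by (field; lra).
  nra.
Qed.

Lemma LimInf_seq_pos_lower_bound (u : nat -> R) :
  Rbar_lt 0 (LimInf_seq u) -> exists c, 0 < c /\ eventually (fun n => c < u n).
Proof.
  unfold LimInf_seq; destruct (ex_LimInf_seq u) as [[l| |] Hl]; simpl; intros Hpos.
  - assert (Hl2 : 0 < l / 2) by lra.
    destruct (Hl (mkposreal _ Hl2)) as [_ [N HN]].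
    exists (l / 2); split; [lra|]; exists N; intros n Hn.
    specialize (HN n Hn); simpl in HN; lra.
  - exists 1; split; [lra|]; exact (Hl 1).
  - contradiction.
Qed.

Lemma bad_density_nonneg {X : Type} (d : X -> X -> R) (z : nat -> X) (a : X)
    (eps : R) (n : nat) :
  0 <= bad_density d z a eps n.
Proof.
  unfold bad_density; destruct n as [|n].
  - simpl; unfold Rdiv; rewrite Rinv_0; lra.
  - apply Rdiv_le_0_compat; [apply pos_INR|apply lt_0_INR; lia].
Qed.

Lemma stat_conv_to_subseq {X : Type} (d : X -> X -> R) (x : nat -> X) (a : X)
    (s : nat -> nat) :
  stat_conv_to d x a -> strictly_incr s ->
  Rbar_lt 0 (LimInf_seq (K_ratio s)) ->
  stat_conv_to d (fun k => x (s k)) a.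
Proof.
  intros Hx Hs Hliminf eps Heps.
  destruct (LimInf_seq_pos_lower_bound _ Hliminf) as [c [Hc HKc]].
  assert (Hshift : filterlim (fun n => S (s n)) eventually eventually)
    by (apply eventually_subseq; intros n; specialize (Hs n); lia).
  apply is_lim_seq_incr_1.
  apply is_lim_seq_le_le_loc with (fun _ => 0)
    (fun n => bad_density d x a eps (S (s n)) / c).
  - apply (filter_imp (fun n => c < K_ratio s (S (s n)))); [|exact (Hshift _ HKc)].
    intros n HcK; split; [apply bad_density_nonneg|].
    pose proof (count_lt_subseq_density_le
      (fun k => if Rle_dec eps (d (x k) a) then true else false) s n Hs) as Hle.
    pose proof (bad_density_nonneg d (fun k => x (s k)) a eps (S n)).
    unfold bad_density in *; cbv beta in Hle.
    apply Rmult_le_reg_r with c; [exact Hc|].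
    unfold Rdiv at 2; rewrite Rmult_assoc, Rinv_l by lra; nra.
  - apply is_lim_seq_const.
  - replace (Finite 0) with (Rbar_mult 0 (/ c)) by (simpl; f_equal; ring).
    apply is_lim_seq_scal_r, is_lim_seq_subseq; [exact Hshift|exact (Hx eps Heps)].
Qed.

Lemma stat_dense_sub_LimInf_pos (s : nat -> nat) :
  stat_dense_sub s -> Rbar_lt 0 (LimInf_seq (K_ratio s)).
Proof.
  intros Hdense; rewrite (is_LimInf_seq_unique _ _ (is_lim_LimInf_seq _ _ Hdense)).
  simpl; lra.
Qed.

Lemma strictly_incr_id : strictly_incr (fun k => k).
Proof. intros k; lia. Qed.

Lemma stat_dense_sub_id : stat_dense_sub (fun k => k).
Proof.
  apply is_lim_seq_ext_loc with (fun _ => 1); [|apply is_lim_seq_const].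
  exists 1%nat; intros n Hn; unfold K_ratio, K_count.
  rewrite count_lt_ltb, Nat.min_id; field; apply not_0_INR; lia.
Qed.

Theorem theorem5 (X : Type) (d : X -> X -> R) (Hd : is_metric d) (x : nat -> X) :
  (stat_conv d x <->
     (forall s : nat -> nat, strictly_incr s ->
        Rbar_lt (Finite 0) (LimInf_seq (K_ratio s)) ->
        stat_conv d (fun k => x (s k))))
  /\
  (stat_conv d x <->
     (forall s : nat -> nat, strictly_incr s -> stat_dense_sub s ->
        stat_conv d (fun k => x (s k)))).
Proof.
  split; split.
  - intros [a Ha] s Hs Hliminf; exists a; exact (stat_conv_to_subseq d x a s Ha Hs Hliminf).
  - intros Hsub; apply (Hsub _ strictly_incr_id).
    exact (stat_dense_sub_LimInf_pos _ stat_dense_sub_id).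
  - intros [a Ha] s Hs Hdense; exists a.
    exact (stat_conv_to_subseq d x a s Ha Hs (stat_dense_sub_LimInf_pos s Hdense)).
  - intros Hsub; exact (Hsub _ strictly_incr_id stat_dense_sub_id).
Qed.
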